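(* Let $X$, $Y_k$ ($k\in\mathbb N$) and norms $\|\cdot\|_{X\oplus Y_k}$ be as in the generalized $\ell^2$-sum setting. Then $\Lambda(X\oplus Y_k)$ is compact in the weak$^*$ topology of the dual of $(\Sigma(X\oplus Y_k),\|\cdot\|_\Sigma)$.
   Context: Setting: $(X,\|\cdot\|_X)$ and $(Y_k,\|\cdot\|_{Y_k})$, $k\in\mathbb N$, are Banach spaces; for each $k$, $\|\cdot\|_{X\oplus Y_k}$ is a norm on $X\oplus Y_k$ coinciding with $\|\cdot\|_X$ on $X$ and with $\|\cdot\|_{Y_k}$ on $Y_k$, and monotone: $\|x+y_k\|_{X\oplus Y_k}\ge\|x\|_X$. Duals of direct sums are identified with direct sums of duals via $(x^*+y^* )(x+y)=x^*(x)+y^*(y)$. $\Lambda(X\oplus Y_k)$ is the set of functionals $x^*+\sum_k\alpha_ky_k^*$ (acting by $x+\sum y_k\mapsto x^*(x)+\sum\alpha_ky_k^*(y_k)$) with $x^*\in X^*$, $y_k^*\in Y_k^*$, $\|x^*+y_k^*\|_{X\oplus Y_k}\le1$ for all $k$, $0\le\alpha_k\le1$, $\sum\alpha_k^2\le1$. $\Sigma(X\oplus Y_k)=\{x+y_1+y_2+\dots:x\in X,y_k\in Y_k,\sum\|y_k\|_{Y_k}^2<\infty\}$ with $\|z\|_\Sigma=\sup\{|z^*(z)|:z^*\in\Lambda(X\oplus Y_k)\}$. *)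

From HB Require Import structures.
From mathcomp Require Import all_boot all_order all_algebra.
From mathcomp Require Import all_classical all_reals all_analysis.
Set Implicit Arguments. Unset Strict Implicit. Unset Printing Implicit Defensive.
Import Order.TTheory GRing.Theory Num.Theory.
Import numFieldNormedType.Exports.
Local Open Scope classical_set_scope.
Local Open Scope ring_scope.

Section L2Sum.
Variables (R : realType) (X : completeNormedModType R)
          (Y : nat -> completeNormedModType R).

Definition is_dual (V : normedModType R) (f : V -> R) : Prop :=
  (forall (a : R) (u v : V), f (a *: u + v) = a * f u + f v) /\ continuous f.

(* [N k x y] is ||x + y||_{X (+) Y_k}: a norm on X (+) Y_k that coincides with
   ||.||_X on X and ||.||_{Y_k} on Y_k, and is monotone. *)
Definition l2sum_norms (N : forall k, X -> Y k -> R) : Prop :=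
  forall k,
    [/\ (forall x1 x2 y1 y2, N k (x1 + x2) (y1 + y2) <= N k x1 y1 + N k x2 y2),
        (forall (a : R) x y, N k (a *: x) (a *: y) = `|a| * N k x y),
        (forall x y, N k x y = 0 -> x = 0 /\ y = 0) &
        [/\ (forall x, N k x 0 = `|x|),
             (forall y, N k 0 y = `|y|) &
             (forall x y, `|x| <= N k x y)]].

(* The underlying set of Sigma(X (+) Y_k): x + y_1 + y_2 + ... with
   sum ||y_k||^2 < oo. *)
Definition Sigma : Type :=
  {z : X * (forall k, Y k) | cvgn (series (fun k => `|z.2 k| ^+ 2))}.

Definition sig_x (z : Sigma) : X := (proj1_sig z).1.
Definition sig_y (z : Sigma) (k : nat) : Y k := (proj1_sig z).2 k.

(* ||x^* + y_k^*||_{(X (+) Y_k)^*} <= 1, i.e. the dual norm is at most one: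
   |x^*(x) + y^*(y)| <= ||x + y||_{X (+) Y_k} for all x, y. *)
Definition dual_norm_le1 (N : forall k, X -> Y k -> R) k
    (xs : X -> R) (ys : Y k -> R) : Prop :=
  forall x y, `|xs x + ys y| <= N k x y.

Definition Lambda (N : forall k, X -> Y k -> R) : set (Sigma -> R) :=
  [set f | exists (xs : X -> R) (ys : forall k, Y k -> R) (al : nat -> R),
     [/\ is_dual xs,
         (forall k, is_dual (ys k)),
         (forall k, dual_norm_le1 N (xs) (ys k)),
         (forall k, 0 <= al k <= 1) /\
         cvgn (series (fun k => al k ^+ 2)) /\
           limn (series (fun k => al k ^+ 2)) <= 1 &
         f = fun z => xs (sig_x z) + limn (series (fun k => al k * ys k (sig_y z k)))]].

Definition sigma_norm (N : forall k, X -> Y k -> R) (z : Sigma) : R :=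
  sup [set `|f z| | f in Lambda N].

Definition sig_lincomb (a : R) (z1 z2 z3 : Sigma) : Prop :=
  sig_x z3 = a *: sig_x z1 + sig_x z2 /\
  forall k, sig_y z3 k = a *: sig_y z1 k + sig_y z2 k.

Definition sigma_dual (N : forall k, X -> Y k -> R) : set (Sigma -> R) :=
  [set f | (forall a z1 z2 z3, sig_lincomb a z1 z2 z3 -> f z3 = a * f z1 + f z2)
           /\ exists C : R, forall z, `|f z| <= C * sigma_norm N z].

End L2Sum.

From HB Require Import structures.
From mathcomp Require Import all_boot all_order all_algebra.
From mathcomp Require Import all_classical all_reals all_analysis.
From mathcomp Require Import ring lra.
Import Order.TTheory GRing.Theory Num.Theory.
Import numFieldNormedType.Exports.
Local Open Scope classical_set_scope.
Local Open Scope ring_scope.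
Set Implicit Arguments. Unset Strict Implicit. Unset Printing Implicit Defensive.

(* An element of Lambda is parametrised by functionals x^*, y_k^* of norm at
   most one and weights alpha in the unit ball of l^2.  By Cauchy-Schwarz (in
   its AM-GM form) the tail sum_(k >= n) alpha_k y_k^*(y_k) is bounded by the
   tail of sum ||y_k||^2, uniformly in the parameters.  With n = 0 this shows
   that Lambda is pointwise bounded, so the supremum defining ||.||_Sigma is
   finite and dominates every element.  Along an ultrafilter on Lambda every
   coordinate of the parameters is bounded, hence converges; the limit
   parameters are again admissible, and the uniform tail bound reduces
   pointwise convergence of the functionals to that of finitely many terms. *)

Lemma ptws_cvg (T : Type) (V : topologicalType) (F : set_system {ptws T -> V})
    (g : {ptws T -> V}) :
  Filter F -> (forall t, (fun f : T -> V => f t) @ F --> g t) -> F --> g.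
Proof.
move=> FF Fg; apply/cvg_sup => t; apply/cvg_image => //.
  by rewrite eqEsubset; split => // v _; exists (fun _ => v).
move=> B /Fg FB; exists ((fun f : T -> V => f t) @^-1` B) => //.
by rewrite image_preimage // eqEsubset; split => // v _; exists (fun _ => v).
Qed.

Section RealFacts.
Variable R : realType.

Lemma ultra_bounded_cvg (T : Type) (F : set_system T) (g : T -> R) (a b : R) :
  UltraFilter F -> (\forall t \near F, a <= g t <= b) -> cvg (g @ F).
Proof.
move=> FU Fab; have FF : ProperFilter F := @ultra_proper _ _ FU.
have Fg_ab : F (g @^-1` `[a, b]%classic).
  by apply: filterS Fab => t abt /=; rewrite in_itv.
have [c [_ clus_c]] := segment_compact (fmap_proper_filter g FF) Fg_ab.
apply/cvg_ex; exists c => B Bc.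
case: (in_ultra_setVsetC (g @^-1` B) FU) => // FnB.
by have [t [+ ?]] := clus_c (~` B) B FnB Bc.
Qed.

Lemma cvgr_norm_le (T : Type) (F : set_system T) {FF : ProperFilter F}
    (g : T -> R) l C :
  g @ F --> l -> (\forall t \near F, `|g t| <= C) -> `|l| <= C.
Proof. by move=> /cvg_norm gl; apply: cvgr_to_le gl. Qed.

Lemma cvg_series_pointwise (T : Type) (F : set_system T) {FF : Filter F}
    (u : T -> nat -> R) (l : nat -> R) :
  (forall k, (fun t => u t k) @ F --> l k) ->
  forall n, (fun t => series (u t) n) @ F --> series l n.
Proof.
move=> ul n; rewrite /series /=.
by apply: cvg_big => [|k _]; [exact: add_continuous | exact: ul].
Qed.

Definition linear_form (V : normedModType R) (f : V -> R) :=
  forall (a : R) (u v : V), f (a *: u + v) = a * f u + f v.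

Section LinearForm.
Variables (V : normedModType R) (f : V -> R).
Hypothesis f_lin : linear_form f.

Lemma linear_formD u v : f (u + v) = f u + f v.
Proof. by rewrite -[u]scale1r f_lin mul1r scale1r. Qed.

Lemma linear_form0 : f 0 = 0.
Proof.
by have := congr1 (fun t => t - f 0) (linear_formD 0 0); rewrite /= addr0 subrr addrK.
Qed.

Lemma linear_formB u v : f (u - v) = f u - f v.
Proof. by rewrite addrC -scaleN1r f_lin mulN1r addrC. Qed.

Lemma linear_form_continuous : (forall u, `|f u| <= `|u|) -> continuous f.
Proof.
move=> f_le x; apply/cvgrPdist_le => e e0.
have : \forall y \near x, `|x - y| <= e.
  exact: (@cvgr_dist_le _ _ _ (nbhs x) _ id x cvg_id e e0).
by apply: filterS => y xy; rewrite -linear_formB; apply: le_trans (f_le _) xy.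
Qed.

End LinearForm.

Lemma is_dual_lim (T : Type) (F : set_system T) {FF : ProperFilter F}
    (V : normedModType R) (g : T -> V -> R) (f : V -> R) :
  (\forall t \near F, linear_form (g t) /\ forall v, `|g t v| <= `|v|) ->
  (forall v, g t v @[t --> F] --> f v) -> is_dual f.
Proof.
move=> Fg gf; have f_lin : linear_form f.
  move=> a u v; have g_lin : g t (a *: u + v) @[t --> F] --> a * f u + f v.
    apply: (@cvg_trans _ ((fun t => a * g t u + g t v) @ F)).
      by apply: near_eq_cvg; apply: filterS Fg => t [g_lin _]; rewrite g_lin.
    by apply: cvgD; [apply: cvgMl_tmp|]; exact: gf.
  exact: cvg_unique (gf _) g_lin.
split => //; apply: linear_form_continuous => // v.
by apply: cvgr_norm_le (gf v) _; apply: filterS Fg => t [_]; apply.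
Qed.

Lemma series_le_limn (u : nat -> R) : (forall k, 0 <= u k) -> cvgn (series u) ->
  forall n, series u n <= limn (series u).
Proof.
move=> u_ge0; apply: nondecreasing_cvgn_le.
exact: (@nondecreasing_series _ u xpredT 0 (fun k _ _ => u_ge0 k)).
Qed.

Lemma mulr_le_amgm (t a u : R) : 0 < t -> a * u <= (t * a ^+ 2 + u ^+ 2 / t) / 2.
Proof.
move=> t_gt0; have tV : t * t^-1 = 1 by rewrite mulfV // gt_eqF.
have : 0 <= (t * a - u) ^+ 2 / t by rewrite divr_ge0 ?sqr_ge0 ?ltW.
have -> : (t * a - u) ^+ 2 / t = t * (t * t^-1) * a ^+ 2 - 2 * (t * t^-1) * (a * u)
    + u ^+ 2 / t by ring.
rewrite tV !mulr1; lra.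
Qed.

Definition l2_unit_weights (al : nat -> R) : Prop :=
  (forall k, 0 <= al k <= 1) /\ cvgn (series (fun k => al k ^+ 2)) /\
  limn (series (fun k => al k ^+ 2)) <= 1.

Lemma l2_unit_weights_lim (T : Type) (F : set_system T) {FF : ProperFilter F}
    (w : T -> nat -> R) (al : nat -> R) :
  (\forall t \near F, l2_unit_weights (w t)) ->
  (forall k, w t k @[t --> F] --> al k) -> l2_unit_weights al.
Proof.
move=> Fw w_al; have sq_ge0 (v : nat -> R) k : 0 <= v k ^+ 2 by exact: sqr_ge0.
have w2_al2 k : w t k ^+ 2 @[t --> F] --> al k ^+ 2.
  by rewrite expr2; under eq_cvg do rewrite expr2; exact: cvgM.
have al2_le1 n : series (fun k => al k ^+ 2) n <= 1.
  apply: cvgr_to_le (cvg_series_pointwise (u := fun t k => w t k ^+ 2) w2_al2 (n := n)) _.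
  apply: filterS Fw => t [_ [w2_cvg w2_le1]]; apply: le_trans w2_le1.
  exact: series_le_limn.
have al2_cvg : cvgn (series (fun k => al k ^+ 2)).
  apply: nondecreasing_is_cvgn; last by exists 1 => _ [n _ <-].
  exact: (@nondecreasing_series _ _ xpredT 0 (fun k _ _ => sq_ge0 al k)).
split; last by split => //; apply: limr_le => //; exact: nearW.
move=> k; apply/andP; split; [apply: cvgr_to_ge (w_al k) _ | apply: cvgr_to_le (w_al k) _];
  by apply: filterS Fw => t [/(_ k)/andP[]].
Qed.

Section DominatedSeries.
Variables (a u c : nat -> R).
Hypotheses (c_le : forall k, `|c k| <= a k * u k)
  (a2_cvg : cvgn (series (fun k => a k ^+ 2)))
  (u2_cvg : cvgn (series (fun k => u k ^+ 2))).

Lemma is_cvg_series_dominated : cvgn (series c).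
Proof.
apply: normed_cvg; apply: (@series_le_cvg _ _ (fun k => (a k ^+ 2 + u k ^+ 2) / 2)).
- by move=> k /=.
- by move=> k; rewrite divr_ge0 ?addr_ge0 ?sqr_ge0.
- by move=> k /=; apply: le_trans (c_le k) _; have := mulr_le_amgm (a k) (u k) ltr01;
    rewrite mul1r divr1.
- have -> : (fun k => (a k ^+ 2 + u k ^+ 2) / 2) =
      2^-1 *: ((fun k => a k ^+ 2) + (fun k => u k ^+ 2)).
    by apply/funext => k; rewrite /= mulrC.
  exact/is_cvg_seriesZ/is_cvg_seriesD.
Qed.

Lemma series_tail_dominated : limn (series (fun k => a k ^+ 2)) <= 1 ->
  forall n t, 0 < t -> `|limn (series c) - series c n| <=
    (t + (limn (series (fun k => u k ^+ 2)) - series (fun k => u k ^+ 2) n) / t) / 2.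
Proof.
move=> a2_le1 n t t_gt0.
apply: (@cvgr_to_le nat \oo _ R (fun m => `|series c m - series c n|)).
  by apply: cvg_norm; apply: cvgB; [exact: is_cvg_series_dominated | exact: cvg_cst].
near=> m; have nm : (n <= m)%N by near: m; exact: nbhs_infty_ge.
rewrite sub_series_geq //; apply: le_trans (ler_norm_sum _ _ _) _.
apply: le_trans (_ : \sum_(n <= k < m) ((t * a k ^+ 2 + u k ^+ 2 / t) / 2) <= _).
  by apply: ler_sum => k _; apply: le_trans (c_le k) _; exact: mulr_le_amgm.
rewrite -mulr_suml big_split /= -mulr_sumr -mulr_suml -!sub_series_geq //.
have sq_ge0 (v : nat -> R) k : 0 <= v k ^+ 2 by exact: sqr_ge0.
have a2_tail : series (fun k => a k ^+ 2) m - series (fun k => a k ^+ 2) n <= 1.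
  apply: le_trans a2_le1; apply: le_trans (series_le_limn (sq_ge0 a) a2_cvg m).
  by rewrite lerBlDr lerDl; apply: sumr_ge0.
have u2_tail : series (fun k => u k ^+ 2) m - series (fun k => u k ^+ 2) n <=
    limn (series (fun k => u k ^+ 2)) - series (fun k => u k ^+ 2) n.
  by rewrite lerD2r; exact: series_le_limn.
apply: ler_wpM2r => //; apply: lerD.
  exact: ler_piMr (ltW t_gt0) a2_tail.
by apply: ler_wpM2r u2_tail; rewrite invr_ge0 ltW.
Unshelve. all: by end_near.
Qed.

End DominatedSeries.

End RealFacts.

Section LambdaSet.
Variables (R : realType) (X : completeNormedModType R)
  (Y : nat -> completeNormedModType R) (N : forall k, X -> Y k -> R).
Hypothesis HN : l2sum_norms N.

Record lambda_data := LambdaData {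
  dual_x : X -> R;
  dual_y : forall k, Y k -> R;
  weight : nat -> R }.
Arguments dual_y : clear implicits.

Definition admissible (p : lambda_data) : Prop :=
  [/\ is_dual (dual_x p), forall k, is_dual (dual_y p k),
      forall k, dual_norm_le1 N (dual_x p) (dual_y p k) &
      l2_unit_weights (weight p)].

Definition lambda_term (p : lambda_data) (z : Sigma X Y) (k : nat) : R :=
  weight p k * dual_y p k (sig_y z k).

Definition lambda_fun (p : lambda_data) (z : Sigma X Y) : R :=
  dual_x p (sig_x z) + limn (series (lambda_term p z)).

Lemma LambdaE f : Lambda N f <-> exists2 p, admissible p & f = lambda_fun p.
Proof.
split => [[xs [ys [al [? ? ? ? ->]]]]|[[xs ys al] [? ? ? ?] ->]].
  by exists (LambdaData xs ys al).
by exists xs, ys, al.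
Qed.

Section Admissible.
Variable p : lambda_data.
Hypothesis p_adm : admissible p.

Lemma admissible_dual_x_le x : `|dual_x p x| <= `|x|.
Proof.
have [_ /(_ 0%N) [y_lin _] xy_le1 _] := p_adm; have := xy_le1 0%N x 0.
by rewrite linear_form0 // addr0; case: (HN 0%N) => _ _ _ [-> _ _].
Qed.

Lemma admissible_dual_y_le k y : `|dual_y p k y| <= `|y|.
Proof.
have [[x_lin _] _ xy_le1 _] := p_adm; have := xy_le1 k 0 y.
by rewrite linear_form0 // add0r; case: (HN k) => _ _ _ [_ -> _].
Qed.

Lemma lambda_term_le z k : `|lambda_term p z k| <= weight p k * `|sig_y z k|.
Proof.
have [_ _ _ [/(_ k)/andP[w_ge0 _] _]] := p_adm.
by rewrite normrM ger0_norm // ler_wpM2l // admissible_dual_y_le.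
Qed.

Lemma is_cvg_lambda_series z : cvgn (series (lambda_term p z)).
Proof.
have [_ _ _ [_ [w2_cvg _]]] := p_adm.
exact: is_cvg_series_dominated (lambda_term_le z) w2_cvg (proj2_sig z).
Qed.

Lemma lambda_series_tail z n t : 0 < t ->
  `|limn (series (lambda_term p z)) - series (lambda_term p z) n| <=
    (t + (limn (series (fun k => `|sig_y z k| ^+ 2))
          - series (fun k => `|sig_y z k| ^+ 2) n) / t) / 2.
Proof.
have [_ _ _ [_ [w2_cvg w2_le1]]] := p_adm.
exact: series_tail_dominated (lambda_term_le z) w2_cvg (proj2_sig z) w2_le1 n t.
Qed.

Lemma lambda_fun_lincomb a z1 z2 z3 : sig_lincomb a z1 z2 z3 ->
  lambda_fun p z3 = a * lambda_fun p z1 + lambda_fun p z2.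
Proof.
move=> [x3E y3E]; have [[x_lin _] y_dual _ _] := p_adm.
have series3E : series (lambda_term p z3) =
    (fun n => a * series (lambda_term p z1) n + series (lambda_term p z2) n).
  apply/funext => n; rewrite !seriesEnat /= mulr_sumr -big_split /=.
  by apply: eq_bigr => k _; rewrite /lambda_term y3E (y_dual k).1; ring.
have lim3E : limn (series (lambda_term p z3)) =
    a * limn (series (lambda_term p z1)) + limn (series (lambda_term p z2)).
  apply: cvg_lim => //; rewrite series3E.
  by apply: cvgD; [apply: cvgMl_tmp|]; exact: is_cvg_lambda_series.
by rewrite /lambda_fun x3E x_lin lim3E; ring.
Qed.

Lemma lambda_fun_le z :
  `|lambda_fun p z| <= `|sig_x z| + (1 + limn (series (fun k => `|sig_y z k| ^+ 2))) / 2.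
Proof.
have := lambda_series_tail z 0 ltr01.
rewrite !seriesEnat /= !big_geq // !subr0 divr1 => tail_le.
by apply: le_trans (ler_normD _ _) _; rewrite lerD ?admissible_dual_x_le.
Qed.

End Admissible.

Lemma lambda_fun_le_sigma_norm p z :
  admissible p -> `|lambda_fun p z| <= sigma_norm N z.
Proof.
move=> p_adm; have p_Lambda : Lambda N (lambda_fun p) by apply/LambdaE; exists p.
apply: sup_upper_bound; last by exists (lambda_fun p).
split; first by exists `|lambda_fun p z|, (lambda_fun p).
exists (`|sig_x z| + (1 + limn (series (fun k => `|sig_y z k| ^+ 2))) / 2).
by move=> _ [g /LambdaE [q q_adm ->] <-]; exact: lambda_fun_le.
Qed.

Lemma Lambda_sub_sigma_dual : Lambda N `<=` sigma_dual N.
Proof.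
move=> f /LambdaE [p p_adm ->]; split; first by move=> *; exact: lambda_fun_lincomb.
by exists 1 => z; rewrite mul1r lambda_fun_le_sigma_norm.
Qed.

Definition lambda_data_cvg (T : Type) (F : set_system T) (q : T -> lambda_data)
    (p : lambda_data) : Prop :=
  [/\ forall x, dual_x (q t) x @[t --> F] --> dual_x p x,
      forall k y, dual_y (q t) k y @[t --> F] --> dual_y p k y &
      forall k, weight (q t) k @[t --> F] --> weight p k].

Section DataLimit.
Variables (T : Type) (F : set_system T) (q : T -> lambda_data) (p : lambda_data).
Context {FF : ProperFilter F}.
Hypotheses (q_adm : \forall t \near F, admissible (q t))
  (q_p : lambda_data_cvg F q p).

Lemma admissible_lim : admissible p.
Proof.
have [x_p y_p w_p] := q_p; split.
- apply: is_dual_lim x_p; apply: filterS q_adm => t t_adm.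
  by split; [case: t_adm => [[]] | exact: admissible_dual_x_le].
- move=> k; apply: is_dual_lim (y_p k); apply: filterS q_adm => t t_adm.
  by split; [case: t_adm => _ /(_ k) [] | exact: admissible_dual_y_le].
- move=> k x y; apply: cvgr_norm_le (cvgD (x_p x) (y_p k y)) _.
  by apply: filterS q_adm => t [_ _ xy_le1 _]; exact: xy_le1.
- by apply: l2_unit_weights_lim w_p; apply: filterS q_adm => t [].
Qed.

Lemma lambda_fun_cvg z : lambda_fun (q t) z @[t --> F] --> lambda_fun p z.
Proof.
have p_adm := admissible_lim; have [x_p y_p w_p] := q_p.
apply/cvgrPdist_le => e e_gt0; have e4_gt0 : 0 < e / 4 by rewrite divr_gt0.
set U := series (fun k => `|sig_y z k| ^+ 2).
have [n U_tail] : exists n, `|limn U - U n| <= (e / 4) ^+ 2.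
  apply: (@filter_ex _ \oo _).
  exact: (@cvgr_dist_le _ _ _ _ _ U _ (proj2_sig z) _ (exprn_gt0 2 e4_gt0)).
have tail_le r : admissible r ->
    `|limn (series (lambda_term r z)) - series (lambda_term r z) n| <= e / 4.
  move=> r_adm; apply: le_trans (lambda_series_tail r_adm z n e4_gt0) _.
  have : (limn U - U n) / (e / 4) <= e / 4.
    by rewrite ler_pdivrMr // -expr2; exact: le_trans (ler_norm _) U_tail.
  rewrite -/U; lra.
have term_cvg k : lambda_term (q t) z k @[t --> F] --> lambda_term p z k.
  exact: cvgM (w_p k) (y_p k _).
have x_near : \forall t \near F,
    `|dual_x p (sig_x z) - dual_x (q t) (sig_x z)| <= e / 4.
  exact: (@cvgr_dist_le _ _ _ F _ _ _ (x_p (sig_x z)) _ e4_gt0).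
have partial_near : \forall t \near F,
    `|series (lambda_term p z) n - series (lambda_term (q t) z) n| <= e / 4.
  exact: (@cvgr_dist_le _ _ _ F _ _ _
    (cvg_series_pointwise (u := fun t => lambda_term (q t) z) term_cvg (n := n)) _ e4_gt0).
near=> t; have t_adm : admissible (q t) by near: t.
have x_le : `|dual_x p (sig_x z) - dual_x (q t) (sig_x z)| <= e / 4 by near: t.
have partial_le : `|series (lambda_term p z) n - series (lambda_term (q t) z) n| <= e / 4.
  by near: t.
move: x_le partial_le (tail_le _ p_adm) (tail_le _ t_adm).
rewrite /lambda_fun !ler_norml => /andP[? ?] /andP[? ?] /andP[? ?] /andP[? ?].
apply/andP; split; lra.
Unshelve. all: by end_near.
Qed.

End DataLimit.

Lemma ultra_lambda_data_cvg (T : Type) (F : set_system T) (q : T -> lambda_data) :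
  UltraFilter F -> (\forall t \near F, admissible (q t)) ->
  exists p, lambda_data_cvg F q p.
Proof.
move=> F_ultra q_adm; have FF : ProperFilter F := @ultra_proper _ _ F_ultra.
have norm_bounded_cvg (g : T -> R) b : (\forall t \near F, `|g t| <= b) -> cvg (g @ F).
  by move=> g_le; apply: (ultra_bounded_cvg (a := - b) (b := b)) F_ultra _;
    apply: filterS g_le => t; rewrite ler_norml.
exists (LambdaData (fun x => lim (dual_x (q t) x @[t --> F]))
  (fun k y => lim (dual_y (q t) k y @[t --> F])) (fun k => lim (weight (q t) k @[t --> F]))).
split => [x|k y|k].
- by apply: norm_bounded_cvg; apply: filterS q_adm => t /admissible_dual_x_le.
- by apply: norm_bounded_cvg; apply: filterS q_adm => t /admissible_dual_y_le.
- by apply: (ultra_bounded_cvg (a := 0) (b := 1)) F_ultra _;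
    apply: filterS q_adm => t [_ _ _ [w01 _]]; exact: w01.
Qed.

Lemma Lambda_compact : compact (Lambda N : set {ptws Sigma X Y -> R}).
Proof.
rewrite compact_ultra => F F_ultra F_Lambda.
have FF : ProperFilter F := @ultra_proper _ _ F_ultra.
have [param param_spec] : {param : (Sigma X Y -> R) -> lambda_data &
    forall f, Lambda N f -> admissible (param f) /\ f = lambda_fun (param f)}.
  apply: (boolp.choice (P := fun f p => Lambda N f -> admissible p /\ f = lambda_fun p)).
  move=> f; have [/LambdaE [p p_adm ->]|f_notin] := pselect (Lambda N f).
    by exists p.
  by exists (LambdaData (fun _ => 0) (fun _ _ => 0) (fun _ => 0)) => /f_notin.
have param_adm : \forall f \near F, admissible (param f).
  by apply: filterS F_Lambda => f /param_spec[].
have [p param_p] := ultra_lambda_data_cvg F_ultra param_adm.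
exists (lambda_fun p); split.
  by apply/LambdaE; exists p => //; exact: admissible_lim param_adm param_p.
apply: ptws_cvg => z; apply: (@cvg_trans _ ((fun f => lambda_fun (param f) z) @ F)).
  by apply: near_eq_cvg; apply: filterS F_Lambda => f /param_spec[_ <-].
exact: lambda_fun_cvg param_adm param_p z.
Qed.

End LambdaSet.

Theorem lemma2p5 (R : realType) (X : completeNormedModType R)
    (Y : nat -> completeNormedModType R) (N : forall k, X -> Y k -> R)
    (HN : l2sum_norms N) :
  Lambda N `<=` sigma_dual N /\
  compact (Lambda N : set {ptws Sigma X Y -> R}).
Proof. by split; [exact: Lambda_sub_sigma_dual | exact: Lambda_compact]. Qed.
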